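(* Let $p<1$, $p\neq0$. For $t\in[0,T]$ and $n\in\mathbb N$ let $\mathcal O^n_t=\{x\in\mathbb{R}^d:x^Tz\ge-1+\frac1n\ \forall z\in\mathbf S_t\}$ and define on $\mathbf S_t\times\mathcal O^n_t$ \[ \mathcal I(z,x)=\begin{cases}\dfrac{p^{-1}((1+x^Tz)^p-1)-x^Tz}{|z|^{2-\varepsilon}\wedge1},&|z|>0,\\ 0,&z=0.\end{cases} \] Then $\mathcal I$ is continuous, and there is a constant $C(n,\kappa_t)<\infty$ (depending on $n$ and $\kappa_t$) such that $\sup_{x\in\mathcal O^n_t}\sup_{z\ne\hat z\in\mathbf S_t}|\mathcal I(z,x)-\mathcal I(\hat z,x)|\le C(n,\kappa_t)|z-\hat z|^{\varepsilon\wedge1}$, $\sup_{z\in\mathbf S_t}\sup_{x\ne\hat x\in\mathcal O^n_t}|\mathcal I(z,x)-\mathcal I(z,\hat x)|\le C(n,\kappa_t)|x-\hat x|$, and $\sup_{(z,x)\in\mathbf S_t\times\mathcal O^n_t}|\mathcal I(z,x)|\le C(n,\kappa_t)$.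
   Context: Fix $T>0$, $d\ge1$, $\varepsilon\in(0,2]$. Let $\mathbb{S}^d_+$ be the symmetric positive definite $d\times d$ matrices, $\mathcal L$ the Lévy measures on $\mathbb{R}^d$, with $d^\varepsilon_{\mathcal L}(\mu,\nu)=\sup\int f\,d(\tilde\mu-\tilde\nu)$, $\tilde\mu(A)=\int_A(|z|^{2-\varepsilon}\wedge1)\mu(dz)$, sup over bounded continuous $f$ with $\sup_{z\neq\hat z}[|f(z)|\vee|f(z)-f(\hat z)|/|z-\hat z|^{\varepsilon\wedge1}]\le1$. $\mathcal C\subset\mathbb{R}^d\times\mathbb{S}^d_+\times\mathcal L$ is compact for $d_{\mathcal C}=|y-\hat y|\vee\|M-\hat M\|_2\vee d^\varepsilon_{\mathcal L}(\mu,\hat\mu)$; $\Theta:[0,T]\twoheadrightarrow\mathcal C$ is a weakly measurable correspondence with closed convex values. Assume $\mathbf S_t=\bigcup_{(y,M,\mu)\in\Theta_t}\mathrm{supp}(\mu)$ is closed, there is $\kappa_t>0$ with $\{|z|\le\kappa_t^{-1}\}\subseteq\mathrm{Conv}(\mathbf S_t\cup\{0\})\subseteq\{|z|\le\kappa_t\}$, and $|y|\vee\|M\|_2\vee d^\varepsilon_{\mathcal L}(\mu,0)\le\kappa_t$ for all $(y,M,\mu)\in\Theta_t$. *)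

From HB Require Import structures.
From mathcomp Require Import all_boot all_order all_algebra.
From mathcomp Require Import all_classical all_reals all_analysis.
Set Implicit Arguments. Unset Strict Implicit. Unset Printing Implicit Defensive.
Import Order.TTheory GRing.Theory Num.Theory.
Import numFieldNormedType.Exports.
Local Open Scope classical_set_scope.
Local Open Scope ring_scope.

Definition dotv {R : realType} {d : nat} (x z : 'rV[R]_d) : R :=
  \sum_(i < d) x 0 i * z 0 i.

Definition enorm {R : realType} {d : nat} (z : 'rV[R]_d) : R :=
  Num.sqrt (dotv z z).

Definition conv_hull {R : realType} {d : nat} (A : set 'rV[R]_d) : set 'rV[R]_d :=
  [set y | exists (k : nat) (w : 'I_k -> R) (a : 'I_k -> 'rV[R]_d),
     (forall i, 0 <= w i) /\ \sum_(i < k) w i = 1 /\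
     (forall i, A (a i)) /\ y = \sum_(i < k) w i *: a i].

Definition eball0 {R : realType} {d : nat} (r : R) : set 'rV[R]_d :=
  [set z | enorm z <= r].

Definition Oset {R : realType} {d : nat} (S : set 'rV[R]_d) (n : nat) : set 'rV[R]_d :=
  [set x | forall z, S z -> - 1 + n%:R^-1 <= dotv x z].

Definition Ifun {R : realType} {d : nat} (p eps : R) (z x : 'rV[R]_d) : R :=
  if z == 0 then 0
  else (p^-1 * (powR (1 + dotv x z) p - 1) - dotv x z)
       / Num.min (powR (enorm z) (2 - eps)) 1.

(* Write u = x^T z, Z = |z| and w(Z) = Z^(2-eps) ∧ 1, so that I(z,x) = phi(u) / w(Z)
   with phi(u) = p^-1 ((1+u)^p - 1) - u; as phi(0) = 0 this also covers z = 0.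
   On O^n_t we have 1 + u >= 1/n, and the mean value theorem applied to phi and to
   y |-> y^(p-1) gives |phi(u) - phi(v)| <= M max(|u|,|v|) |u - v| and |phi(u)| <= M u^2
   with M = |p - 1| n^(2-p).  The two hull conditions bound |z| and |x| by kappa, so
   |u| <= kappa Z.  What remains are two facts about the weight: Z^2 / w(Z) equals
   max(Z^eps, Z^2), hence is nondecreasing, and D Z / w(Z) <= C D^(eps ∧ 1) whenever
   0 < D <= 2 Z <= 2 kappa.  Splitting
     I(z,x) - I(zh,x) = (phi(u) - phi(uh)) / w(Z) + phi(uh) (1/w(Z) - 1/w(Zh))
   with |zh| <= |z| <= |zh| + |z - zh| gives the Hölder bound in z; the Lipschitz bound
   in x and the uniform bound are direct, and the first two give joint continuity. *)

From HB Require Import structures.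
From mathcomp Require Import all_boot all_order all_algebra.
From mathcomp Require Import all_classical all_reals all_analysis.
From mathcomp Require Import ring lra.
Set Implicit Arguments. Unset Strict Implicit. Unset Printing Implicit Defensive.
Import Order.TTheory GRing.Theory Num.Theory.
Import numFieldNormedType.Exports.
Local Open Scope classical_set_scope.
Local Open Scope ring_scope.

Lemma sqr_le_of_norm_le (R : realDomainType) (u B : R) :
  `|u| <= B -> u ^+ 2 <= B ^+ 2.
Proof.
move=> uB; rewrite -real_normK ?num_real // lerXn2r ?nnegrE //.
exact: le_trans uB.
Qed.

Section PowerFunctions.
Variable R : realType.

Lemma norm_sub_le_of_derive_le (f df : R -> R) (s t L : R) :
  (forall x, Num.min s t <= x <= Num.max s t -> is_derive x 1 f (df x)) ->
  (forall x, Num.min s t <= x <= Num.max s t -> `|df x| <= L) ->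
  `|f s - f t| <= L * `|s - t|.
Proof.
wlog st : s t / s <= t.
  move=> W; case/orP: (le_total s t) => h; first exact: W h.
  by rewrite distrC (distrC s) minC maxC; apply: W h.
rewrite (min_idPl st) (max_idPr st) => fd dfL.
have fc : {within `[s, t], continuous f}.
  apply: derivable_within_continuous => x.
  by rewrite in_itv /= => /fd [].
have fdo x : x \in `]s, t[ -> is_derive x 1 f (df x).
  by rewrite in_itv /= => /andP[sx xt]; apply: fd; rewrite !ltW.
rewrite distrC (distrC s).
have [e] := MVT_segment st fdo fc.
rewrite in_itv /= => /dfL dfeL ->.
by rewrite normrM ler_wpM2r.
Qed.

Lemma powR_le_nonpos (a b q : R) : 0 < a -> a <= b -> q <= 0 -> b `^ q <= a `^ q.
Proof.
move=> a0 ab q0; have b0 : 0 < b by apply: lt_le_trans ab.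
rewrite -[q]opprK (powRN b) (powRN a) lef_pV2 ?posrE ?powR_gt0//.
by apply: (@ge0_ler_powR _ (- q)); rewrite ?nnegrE ?oppr_ge0 ?(ltW a0) ?(ltW b0).
Qed.

Lemma le_powR_interp (a B D : R) : 0 < D -> D <= B -> 0 <= a <= 1 ->
  D <= B `^ (1 - a) * D `^ a.
Proof.
move=> D0 DB /andP[a0 a1].
rewrite -{1}(powRr1 (ltW D0)) -{1}(subrK a 1) powRD ?(gt_eqF D0) ?implybT //.
rewrite ler_wpM2r ?powR_ge0 //.
have B0 := lt_le_trans D0 DB.
by apply: (@ge0_ler_powR _ (1 - a)); rewrite ?nnegrE ?subr_ge0 ?(ltW D0) ?(ltW B0).
Qed.

Lemma powR_lipschitz (q c s t : R) : q <= 1 -> 0 < c -> c <= s -> c <= t ->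
  `|s `^ q - t `^ q| <= `|q| * c `^ (q - 1) * `|s - t|.
Proof.
move=> q1 c0 cs ct.
have cx x : Num.min s t <= x -> c <= x.
  by apply: le_trans; rewrite le_min cs ct.
apply: (norm_sub_le_of_derive_le (f := fun y => y `^ q) (df := fun y => q * y `^ (q - 1)))
  => x /andP[/cx xc _].
  exact: is_derive1_powR (lt_le_trans c0 xc).
rewrite normrM (ger0_norm (powR_ge0 _ _)) ler_wpM2l //.
by apply: powR_le_nonpos; rewrite // subr_le0.
Qed.

Definition pow_rem (p u : R) := p^-1 * ((1 + u) `^ p - 1) - u.

Lemma pow_rem0 p : pow_rem p 0 = 0.
Proof. by rewrite /pow_rem addr0 powR1 subrr mulr0 subr0. Qed.

Definition pow_rem_const (p c : R) := `|p - 1| * c `^ (p - 2).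

Lemma pow_rem_const_ge0 p c : 0 <= pow_rem_const p c.
Proof. by rewrite mulr_ge0 ?powR_ge0. Qed.

Variables p c : R.
Hypotheses (p_lt1 : p < 1) (p_neq0 : p != 0) (c_gt0 : 0 < c) (c_le1 : c <= 1).

Lemma pow_rem_lipschitz u v : c - 1 <= u -> c - 1 <= v ->
  `|pow_rem p u - pow_rem p v|
    <= pow_rem_const p c * Num.max `|u| `|v| * `|u - v|.
Proof.
move=> cu cv; have p1_le1 : p - 1 <= 1 by have := p_lt1; lra.
pose G := p^-1 \*: (fun y : R => y `^ p) - (fun y : R => y).
have GE y : G y = p^-1 * y `^ p - y by [].
have -> : pow_rem p u - pow_rem p v = G (1 + u) - G (1 + v).
  by rewrite !GE /pow_rem; ring.
have -> : u - v = 1 + u - (1 + v) by ring.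
have minc x : Num.min (1 + u) (1 + v) <= x -> c <= x.
  by apply: le_trans; rewrite le_min; apply/andP; split; lra.
apply: (norm_sub_le_of_derive_le (f := G) (df := fun x => x `^ (p - 1) - 1))
  => x /andP[xmin xmax]; have cx := minc x xmin.
  apply: is_derive_eq.
    apply: is_deriveB; apply: is_deriveZ; exact: is_derive1_powR (lt_le_trans c_gt0 cx).
  by rewrite /GRing.scale /= mulrA mulVf // mul1r.
have -> : x `^ (p - 1) - 1 = x `^ (p - 1) - 1 `^ (p - 1) by rewrite powR1.
rewrite -mulrA.
apply: le_trans (powR_lipschitz p1_le1 c_gt0 cx c_le1) _.
have -> : p - 1 - 1 = p - 2 by ring.
rewrite -mulrA ler_wpM2l ?mulr_ge0 ?powR_ge0 // ler_wpM2l ?powR_ge0 // ler_norml.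
have /ler_normlP[uM1 uM2] : `|u| <= Num.max `|u| `|v| by rewrite le_max lexx.
have /ler_normlP[vM1 vM2] : `|v| <= Num.max `|u| `|v| by rewrite le_max lexx orbT.
by move: xmin xmax; rewrite ge_min le_max => /orP[] ? /orP[] ?; apply/andP; split; lra.
Qed.

Lemma pow_rem_quadratic u :
  c - 1 <= u -> `|pow_rem p u| <= pow_rem_const p c * u ^+ 2.
Proof.
move=> cu; have c0 : c - 1 <= 0 by have := c_le1; lra.
have := pow_rem_lipschitz cu c0.
rewrite pow_rem0 !subr0 normr0 (max_idPl (normr_ge0 u)) -mulrA -normrM -expr2.
by rewrite ger0_norm ?sqr_ge0.
Qed.

End PowerFunctions.

Section LevyWeight.
Variables (R : realType) (eps : R).
Hypotheses (eps_gt0 : 0 < eps) (eps_le2 : eps <= 2).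

Definition levy_weight (Z : R) := Num.min (Z `^ (2 - eps)) 1.

Lemma levy_weight_ge0 Z : 0 <= levy_weight Z.
Proof. by rewrite /levy_weight le_min powR_ge0 ler01. Qed.

Lemma levy_weight_gt0 Z : 0 < Z -> 0 < levy_weight Z.
Proof. by move=> Z0; rewrite /levy_weight lt_min powR_gt0 ?ltr01. Qed.

Lemma levy_weight_small Z : 0 <= Z <= 1 -> levy_weight Z = Z `^ (2 - eps).
Proof.
move=> /andP[Z0 Z1]; apply/min_idPl.
have := @ge0_ler_powR R (2 - eps) _ Z 1; rewrite powR1; apply; rewrite ?nnegrE //.
by rewrite subr_ge0.
Qed.

Lemma levy_weight_large Z : 1 <= Z -> levy_weight Z = 1.
Proof.
move=> Z1; apply/min_idPr.
have := @ge0_ler_powR R (2 - eps) _ 1 Z; rewrite powR1; apply; rewrite ?nnegrE //.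
- by rewrite subr_ge0.
- exact: le_trans Z1.
Qed.

Lemma levy_weight_homo Z Z' : 0 <= Z -> Z <= Z' -> levy_weight Z <= levy_weight Z'.
Proof.
move=> Z0 ZZ'; rewrite /levy_weight le_min !ge_min lexx orbT andbT.
apply/orP; left; apply: (@ge0_ler_powR _ (2 - eps)); rewrite ?nnegrE ?subr_ge0 //.
exact: le_trans ZZ'.
Qed.

Lemma sqr_div_levy_weight Z :
  0 < Z -> Z ^+ 2 / levy_weight Z = Num.max (Z `^ eps) (Z ^+ 2).
Proof.
move=> Z0; rewrite -(powR_mulrn 2 (ltW Z0)).
have [Z1|Z1] := leP Z 1.
  rewrite levy_weight_small ?(ltW Z0) // -powRB ?(gt_eqF Z0) ?implybT //.
  have -> : 2%:R - (2 - eps) = eps by rewrite /=; ring.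
  by apply/esym/max_idPl; apply: ger_powR; rewrite ?Z0 ?Z1.
rewrite levy_weight_large ?(ltW Z1) // divr1.
by apply/esym/max_idPr; apply: ler_powR; rewrite ?(ltW Z1).
Qed.

Lemma sqr_div_levy_weight_homo Z Z' : 0 <= Z -> Z <= Z' ->
  Z ^+ 2 / levy_weight Z <= Z' ^+ 2 / levy_weight Z'.
Proof.
rewrite le_eqVlt => /predU1P[<-|Z0] ZZ'.
  by rewrite expr0n mul0r divr_ge0 ?sqr_ge0 ?levy_weight_ge0.
have Z'0 := lt_le_trans Z0 ZZ'.
rewrite !sqr_div_levy_weight // ge_max !le_max.
rewrite (@ge0_ler_powR _ eps) ?nnegrE ?(ltW Z0) ?(ltW Z'0) ?(ltW eps_gt0) //.
rewrite lerXn2r ?nnegrE ?(ltW Z0) ?(ltW Z'0) //.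
by rewrite orbT.
Qed.

Lemma sqr_mul_levy_weight_invB Z Z' : 0 <= Z -> Z <= Z' ->
  Z ^+ 2 * `|(levy_weight Z')^-1 - (levy_weight Z)^-1|
    <= (Z' ^+ 2 - Z ^+ 2) / levy_weight Z'.
Proof.
rewrite le_eqVlt => /predU1P[<-|Z0] ZZ'.
  by rewrite expr0n mul0r subr0 divr_ge0 ?sqr_ge0 ?levy_weight_ge0.
have Z'0 := lt_le_trans Z0 ZZ'.
rewrite ler0_norm; last first.
  by rewrite subr_le0 lef_pV2 ?posrE ?levy_weight_gt0 ?levy_weight_homo ?(ltW Z0).
by rewrite opprB mulrBr mulrBl lerD2r sqr_div_levy_weight_homo ?(ltW Z0).
Qed.

Definition holder_const (K : R) := 2 + K * (2 * K) `^ (1 - Num.min eps 1).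

Lemma holder_const_ge0 K : 0 <= K -> 0 <= holder_const K.
Proof. by move=> K0; rewrite addr_ge0 ?mulr_ge0 ?powR_ge0. Qed.

Lemma levy_weight_holder K D Z : 0 < D -> D <= 2 * Z -> Z <= K ->
  D * Z / levy_weight Z <= holder_const K * D `^ Num.min eps 1.
Proof.
move=> D0 DZ ZK; rewrite /holder_const; set a := Num.min eps 1.
have a0 : 0 < a by rewrite lt_min eps_gt0 ltr01.
have a1 : a <= 1 by rewrite ge_min lexx orbT.
have Z0 : 0 < Z by have := D0; lra.
have aD0 : 0 <= D `^ a := powR_ge0 _ _.
have DK : D <= (2 * K) `^ (1 - a) * D `^ a.
  by apply: le_powR_interp => //; [lra | rewrite (ltW a0) a1].
have [Z1|Z1] := leP 1 Z.
  rewrite levy_weight_large // divr1 mulrDl.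
  have : D * Z <= D * K by rewrite ler_wpM2l // ltW.
  have : 0 <= K by lra.
  nra.
rewrite levy_weight_small ?(ltW Z0) ?(ltW Z1) //.
have -> : D * Z / Z `^ (2 - eps) = D * Z `^ (eps - 1).
  rewrite -mulrA -{1}(powRr1 (ltW Z0)) -powRB ?(gt_eqF Z0) ?implybT //.
  by congr (_ * _ `^ _); ring.
have Z_le_a : Z `^ (eps - 1) <= Z `^ (a - 1).
  by apply: ger_powR; rewrite ?Z0 ?(ltW Z1) // lerD2r ge_min lexx.
have a_le_D : Z `^ (a - 1) <= (D / 2) `^ (a - 1).
  by apply: powR_le_nonpos; rewrite ?subr_le0 //; lra.
have D_half : D * (D / 2) `^ (a - 1) = 2 * (D / 2) `^ a.
  rewrite {1}(_ : D = 2 * (D / 2)); last by field.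
  by rewrite -mulrA mulr_powRB1 //; lra.
have half_le : (D / 2) `^ a <= D `^ a.
  by apply: (@ge0_ler_powR _ a); rewrite ?nnegrE ?(ltW a0) //; lra.
apply: le_trans (ler_wpM2l (ltW D0) (le_trans Z_le_a a_le_D)) _.
have : 0 <= K * (2 * K) `^ (1 - a) * D `^ a.
  by rewrite !mulr_ge0 ?powR_ge0 //; lra.
rewrite D_half mulrDl; lra.
Qed.

End LevyWeight.

Section EuclideanGeometry.
Context {R : realType} {d : nat}.
Implicit Types (x z a b : 'rV[R]_d) (k : R).

Lemma dotvC x z : dotv x z = dotv z x.
Proof. by apply: eq_bigr => i _; rewrite mulrC. Qed.

Lemma dotvDr x a b : dotv x (a + b) = dotv x a + dotv x b.
Proof. by rewrite /dotv -big_split; apply: eq_bigr => i _; rewrite mxE mulrDr. Qed.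

Lemma dotvZr x k a : dotv x (k *: a) = k * dotv x a.
Proof. by rewrite /dotv mulr_sumr; apply: eq_bigr => i _; rewrite mxE mulrCA. Qed.

Lemma dotv0r x : dotv x 0 = 0.
Proof. by rewrite /dotv big1 // => i _; rewrite mxE mulr0. Qed.

Lemma dotvBr x a b : dotv x (a - b) = dotv x a - dotv x b.
Proof. by rewrite dotvDr -scaleN1r dotvZr mulN1r. Qed.

Lemma dotvDl x a b : dotv (a + b) x = dotv a x + dotv b x.
Proof. by rewrite dotvC dotvDr !(dotvC x). Qed.

Lemma dotvZl x k a : dotv (k *: a) x = k * dotv a x.
Proof. by rewrite dotvC dotvZr dotvC. Qed.

Lemma dotvBl x a b : dotv (a - b) x = dotv a x - dotv b x.
Proof. by rewrite dotvC dotvBr !(dotvC x). Qed.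

Lemma dotv_sumr x n (w : 'I_n -> R) (a : 'I_n -> 'rV[R]_d) :
  dotv x (\sum_(i < n) w i *: a i) = \sum_(i < n) w i * dotv x (a i).
Proof.
elim: n w a => [|n IH] w a; first by rewrite !big_ord0 dotv0r.
by rewrite !big_ord_recr /= dotvDr IH dotvZr.
Qed.

Lemma dotvv_ge0 z : 0 <= dotv z z.
Proof. by rewrite sumr_ge0 // => i _; rewrite -expr2 sqr_ge0. Qed.

Lemma dotvv_eq0 z : (dotv z z == 0) = (z == 0).
Proof.
apply/idP/eqP => [|->]; last by rewrite dotv0r.
rewrite psumr_eq0 => [/allP z0|i _]; last by rewrite -expr2 sqr_ge0.
apply/rowP => i; rewrite mxE; apply/eqP.
by have := z0 i (mem_index_enum _); rewrite implyTb -expr2 sqrf_eq0.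
Qed.

Lemma enorm_ge0 z : 0 <= enorm z.
Proof. exact: sqrtr_ge0. Qed.

Lemma sqr_enorm z : enorm z ^+ 2 = dotv z z.
Proof. by rewrite sqr_sqrtr // dotvv_ge0. Qed.

Lemma enorm_gt0 z : (0 < enorm z) = (z != 0).
Proof. by rewrite sqrtr_gt0 lt_def dotvv_ge0 dotvv_eq0 andbT. Qed.

Lemma enorm0 : enorm (0 : 'rV[R]_d) = 0.
Proof. by rewrite /enorm dotv0r sqrtr0. Qed.

Lemma enormZ k z : enorm (k *: z) = `|k| * enorm z.
Proof. by rewrite /enorm dotvZl dotvZr mulrA -expr2 sqrtrM ?sqr_ge0 // sqrtr_sqr. Qed.

Lemma enormN z : enorm (- z) = enorm z.
Proof. by rewrite -scaleN1r enormZ normrN1 mul1r. Qed.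

Lemma enorm_distC a b : enorm (a - b) = enorm (b - a).
Proof. by rewrite -opprB enormN. Qed.

Lemma ler_norm_dotv x z : `|dotv x z| <= enorm x * enorm z.
Proof.
have [->|z0] := eqVneq z 0; first by rewrite dotv0r enorm0 normr0 mulr0.
set A := dotv x x; set B := dotv z z; set u := dotv x z.
have B0 : 0 < B by rewrite /B -sqr_enorm exprn_gt0 // enorm_gt0.
have := dotvv_ge0 (B *: x - u *: z).
rewrite !(dotvBl, dotvBr, dotvZl, dotvZr) -/A -/B -/u (dotvC z x) -/u => h.
have uAB : u ^+ 2 <= A * B.
  have : 0 <= B * (A * B - u ^+ 2) by rewrite -[X in _ <= X]opprK; nra.
  by rewrite pmulr_rge0 // subr_ge0.
rewrite /enorm -sqrtrM ?dotvv_ge0 // -/A -/B -sqrtr_sqr ler_sqrt //.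
by rewrite mulr_ge0 // dotvv_ge0.
Qed.

Lemma ler_enormD a b : enorm (a + b) <= enorm a + enorm b.
Proof.
have h : dotv (a + b) (a + b) <= (enorm a + enorm b) ^+ 2.
  rewrite !(dotvDl, dotvDr) (dotvC b a) sqrrD !sqr_enorm.
  have := ler_norm_dotv a b; rewrite ler_norml => /andP[_ h]; lra.
rewrite /enorm -[X in _ <= X]ger0_norm ?addr_ge0 ?enorm_ge0 //.
by rewrite -sqrtr_sqr ler_sqrt // sqr_ge0.
Qed.

Lemma enorm_le_mx_norm z : enorm z <= d%:R * `|z|.
Proof.
have zi i : `|z 0 i| <= `|z|.
  by rewrite [leRHS]/Num.norm /= mx_normrE; apply/bigmax_geP; right; exists (0, i).
have h : dotv z z <= (d%:R * `|z|) ^+ 2.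
  apply: (@le_trans _ _ (\sum_(i < d) `|z| ^+ 2)).
    apply: ler_sum => i _; rewrite -expr2 -real_normK ?num_real //.
    by rewrite lerXn2r ?nnegrE.
  rewrite sumr_const card_ord exprMn -[_ *+ d]mulr_natl.
  apply: ler_wpM2r; first exact: sqr_ge0.
  case: d z zi => [|k] z zi; first by rewrite expr0n.
  by rewrite expr2 ler_peMr // ler1n.
rewrite /enorm -[X in _ <= X]ger0_norm ?mulr_ge0 //.
by rewrite -sqrtr_sqr ler_sqrt // sqr_ge0.
Qed.

End EuclideanGeometry.

Section HullBounds.
Variables (R : realType) (d : nat) (S : set 'rV[R]_d).

Lemma sub_conv_hull (A : set 'rV[R]_d) : A `<=` conv_hull A.
Proof.
move=> z Az; exists 1%N, (fun=> 1), (fun=> z).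
by rewrite !big_ord1 scale1r; split.
Qed.

Lemma enorm_le_of_hull_sub_ball K z :
  conv_hull (S `|` [set 0]) `<=` eball0 K -> S z -> enorm z <= K.
Proof. by move=> hull_sub Sz; apply: hull_sub; apply: sub_conv_hull; left. Qed.

Lemma Oset_dotv_hull n x y : (0 < n)%N -> Oset S n x ->
  conv_hull (S `|` [set 0]) y -> - 1 + n%:R^-1 <= dotv x y.
Proof.
move=> n0 Ox [k [w [a [w0 [w1 [aS ->]]]]]].
rewrite dotv_sumr (le_trans (_ : _ <= \sum_(i < k) w i * (- 1 + n%:R^-1))) //.
  by rewrite -mulr_suml w1 mul1r.
apply: ler_sum => i _; rewrite ler_wpM2l //; case: (aS i) => [/Ox //|/= ->].
by rewrite dotv0r addrC subr_le0 invf_le1 ?ler1n ?ltr0n.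
Qed.

Lemma enorm_le_of_ball_sub_hull K n x : (0 < n)%N -> 0 < K ->
  eball0 K^-1 `<=` conv_hull (S `|` [set 0]) -> Oset S n x -> enorm x <= K.
Proof.
move=> n0 K0 ball_sub Ox.
(* Test the inequality defining [Oset] against [y := - x / (K |x|)], which lies in the
   hull because [|y| = 1/K]. *)
have [->|x0] := eqVneq x 0; first by rewrite enorm0 ltW.
have ex0 : 0 < enorm x by rewrite enorm_gt0.
pose y := (- (K * enorm x)^-1) *: x.
have xy : dotv x y = - (enorm x / K).
  by rewrite dotvZr -sqr_enorm; field; rewrite !gt_eqF.
have /(Oset_dotv_hull n0 Ox) : conv_hull (S `|` [set 0]) y.
  apply: ball_sub; rewrite /eball0 /= enormZ normrN ger0_norm; last first.
    by rewrite invr_ge0 mulr_ge0 // ltW.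
  by rewrite invfM -mulrA mulVf ?mulr1 // gt_eqF.
have : 0 <= n%:R^-1 :> R by rewrite invr_ge0 ler0n.
rewrite xy => n_ge0 h; have : enorm x / K <= 1 by lra.
by rewrite ler_pdivrMr // mul1r.
Qed.

End HullBounds.

Lemma IfunE (R : realType) (d : nat) (p eps : R) (z x : 'rV[R]_d) :
  Ifun p eps z x = pow_rem p (dotv x z) / levy_weight eps (enorm z).
Proof. by rewrite /Ifun; case: eqP => [->|//]; rewrite dotv0r pow_rem0 mul0r. Qed.

Section IntegrandEstimates.
Variables (R : realType) (d : nat) (p eps c K : R).
Hypotheses (p_lt1 : p < 1) (p_neq0 : p != 0) (c_gt0 : 0 < c) (c_le1 : c <= 1).
Hypotheses (eps_gt0 : 0 < eps) (eps_le2 : eps <= 2) (K_ge0 : 0 <= K).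

Implicit Types (x xh z zh : 'rV[R]_d).

Local Notation M := (pow_rem_const p c).
Let M_ge0 : 0 <= M := pow_rem_const_ge0 p c.

Lemma pow_rem_weight_diff_le u uh Z Zh D :
  c - 1 <= u -> c - 1 <= uh -> 0 <= Zh -> Zh <= Z -> Z - Zh <= D ->
  `|u| <= K * Z -> `|uh| <= K * Zh -> `|u - uh| <= K * D ->
  `|pow_rem p u / levy_weight eps Z - pow_rem p uh / levy_weight eps Zh|
    <= 3 * (M * K ^+ 2) * (D * Z / levy_weight eps Z).
Proof.
move=> cu cuh Zh0 ZhZ ZD uK uhK duK.
set w := levy_weight eps Z; set wh := levy_weight eps Zh.
have iw : 0 <= w^-1 by rewrite invr_ge0 levy_weight_ge0.
have -> : pow_rem p u / w - pow_rem p uh / wh =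
    (pow_rem p u - pow_rem p uh) / w + pow_rem p uh * (w^-1 - wh^-1) by ring.
apply: le_trans (ler_normD _ _) _.
have -> : 3 * (M * K ^+ 2) * (D * Z / w) =
    M * (K * Z * (K * D)) * w^-1 + M * K ^+ 2 * ((2 * D * Z) / w) by ring.
apply: lerD.
  rewrite normrM (ger0_norm iw) ler_wpM2r //.
  apply: le_trans (pow_rem_lipschitz p_lt1 p_neq0 c_gt0 c_le1 cu cuh) _.
  rewrite -mulrA ler_wpM2l // ler_pM ?le_max ?normr_ge0 //.
  by rewrite ge_max uK (le_trans uhK) // ler_wpM2l.
set X := `|w^-1 - wh^-1|; have X0 : 0 <= X := normr_ge0 _.
have ZhX : Zh ^+ 2 * X <= 2 * D * Z / w.
  apply: le_trans (sqr_mul_levy_weight_invB eps_gt0 eps_le2 Zh0 ZhZ) _.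
  by rewrite ler_wpM2r //; nra.
have uh_le : `|pow_rem p uh| <= M * K ^+ 2 * Zh ^+ 2.
  apply: le_trans (pow_rem_quadratic p_lt1 p_neq0 c_gt0 c_le1 cuh) _.
  by rewrite -mulrA -exprMn (ler_wpM2l M_ge0) // sqr_le_of_norm_le.
rewrite normrM; apply: le_trans (ler_wpM2r X0 uh_le) _.
by rewrite -(mulrA (M * K ^+ 2)) (ler_wpM2l (mulr_ge0 M_ge0 (sqr_ge0 K))).
Qed.

Lemma norm_dotv_le x z : enorm x <= K -> `|dotv x z| <= K * enorm z.
Proof.
by move=> xK; apply: le_trans (ler_norm_dotv x z) _; rewrite ler_wpM2r ?enorm_ge0.
Qed.

Lemma Ifun_bound x z : enorm x <= K -> enorm z <= K -> c - 1 <= dotv x z ->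
  `|Ifun p eps z x| <= M * K ^+ 2 * (K ^+ 2 / levy_weight eps K).
Proof.
move=> xK zK cu; set Z := enorm z; set w := levy_weight eps Z.
have iw : 0 <= w^-1 by rewrite invr_ge0 levy_weight_ge0.
have u_le : `|pow_rem p (dotv x z)| <= M * (K ^+ 2 * Z ^+ 2).
  apply: le_trans (pow_rem_quadratic p_lt1 p_neq0 c_gt0 c_le1 cu) _.
  by rewrite ler_wpM2l // -exprMn sqr_le_of_norm_le // norm_dotv_le.
have Zw : Z ^+ 2 / w <= K ^+ 2 / levy_weight eps K.
  by apply: sqr_div_levy_weight_homo; rewrite ?enorm_ge0.
have MK : 0 <= M * K ^+ 2 by rewrite mulr_ge0 ?sqr_ge0.
rewrite IfunE normrM (ger0_norm iw) -/Z -/w; nra.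
Qed.

Lemma Ifun_lipschitz z x xh : enorm x <= K -> enorm xh <= K -> enorm z <= K ->
  c - 1 <= dotv x z -> c - 1 <= dotv xh z ->
  `|Ifun p eps z x - Ifun p eps z xh|
    <= M * K * (K ^+ 2 / levy_weight eps K) * enorm (x - xh).
Proof.
move=> xK xhK zK cu cuh; set Z := enorm z; set w := levy_weight eps Z.
have iw : 0 <= w^-1 by rewrite invr_ge0 levy_weight_ge0.
have diff_le : `|pow_rem p (dotv x z) - pow_rem p (dotv xh z)|
    <= M * (K * Z * (enorm (x - xh) * Z)).
  apply: le_trans (pow_rem_lipschitz p_lt1 p_neq0 c_gt0 c_le1 cu cuh) _.
  rewrite -mulrA (ler_wpM2l M_ge0) // ler_pM ?le_max ?normr_ge0 //.
    by rewrite ge_max; apply/andP; split; exact: norm_dotv_le.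
  by rewrite -dotvBl; exact: ler_norm_dotv.
have Zw : Z ^+ 2 / w <= K ^+ 2 / levy_weight eps K.
  by apply: sqr_div_levy_weight_homo; rewrite ?enorm_ge0.
have MKe := mulr_ge0 (mulr_ge0 M_ge0 K_ge0) (enorm_ge0 (x - xh)).
have := ler_wpM2r iw diff_le; have := ler_wpM2l MKe Zw.
rewrite !IfunE -/Z -/w -mulrBl normrM (ger0_norm iw); lra.
Qed.

Lemma Ifun_holder x z zh : enorm x <= K -> enorm z <= K -> enorm zh <= K ->
  c - 1 <= dotv x z -> c - 1 <= dotv x zh ->
  `|Ifun p eps z x - Ifun p eps zh x|
    <= 3 * (M * K ^+ 2) * holder_const eps K * enorm (z - zh) `^ Num.min eps 1.
Proof.
move=> xK; wlog Zh_le : z zh / enorm zh <= enorm z.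
  move=> W zK zhK cz czh.
  case/orP: (le_total (enorm zh) (enorm z)) => h; first exact: W.
  by rewrite distrC enorm_distC; apply: W.
move=> zK zhK cz czh.
have [<-|z_neq] := eqVneq z zh.
  by rewrite subrr normr0 !mulr_ge0 ?powR_ge0 ?sqr_ge0 ?holder_const_ge0.
set D := enorm (z - zh).
have D0 : 0 < D by rewrite enorm_gt0 subr_eq0.
have DZ : D <= 2 * enorm z.
  by have := ler_enormD z (- zh); rewrite enormN -/D; lra.
have ZD : enorm z - enorm zh <= D.
  by have := ler_enormD (z - zh) zh; rewrite subrK -/D; lra.
rewrite !IfunE -mulrA.
apply: le_trans (pow_rem_weight_diff_le cz czh (enorm_ge0 zh) Zh_le ZD _ _ _) _.
- exact: norm_dotv_le.
- exact: norm_dotv_le.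
- by rewrite -dotvBr norm_dotv_le.
rewrite ler_wpM2l ?(mulr_ge0 _ (mulr_ge0 M_ge0 (sqr_ge0 K))) //.
exact: levy_weight_holder.
Qed.

End IntegrandEstimates.

Lemma near_enorm_le (R : realType) (d : nat) (w : 'rV[R]_d * 'rV[R]_d) (r : R) :
  (0 < d)%N -> 0 < r ->
  \forall t \near w, enorm (w.1 - t.1) <= r /\ enorm (w.2 - t.2) <= r.
Proof.
move=> d0 r0; have dR : 0 < d%:R :> R by rewrite ltr0n.
apply: filterS (nbhsx_ballx w _ (divr_gt0 r0 dR)) => t [].
rewrite -!ball_normE /= => t1 t2.
have small (v : 'rV[R]_d) : `|v| < r / d%:R -> enorm v <= r.
  move=> v_lt; apply: le_trans (enorm_le_mx_norm v) _.
  by rewrite -ler_pdivlMl // mulrC ltW.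
by split; apply: small.
Qed.

Lemma holder_lipschitz_continuous (R : realType) (d : nat)
    (A : set ('rV[R]_d * 'rV[R]_d)) (f : 'rV[R]_d * 'rV[R]_d -> R) (Ch Cl a : R) :
  (0 < d)%N -> 0 <= Ch -> 0 <= Cl -> 0 < a ->
  (forall w w', A w -> A w' ->
     `|f w - f w'| <= Ch * enorm (w.1 - w'.1) `^ a + Cl * enorm (w.2 - w'.2)) ->
  {within A, continuous f}.
Proof.
move=> d0 Ch0 Cl0 a0 f_le; apply/subspace_continuousP => w Aw.
apply/cvgrPdist_lt => e e0.
pose b := e / (2 * (Ch + Cl + 1)).
have b0 : 0 < b by rewrite divr_gt0 // mulr_gt0 //; lra.
have b_small : (Ch + Cl) * b < e.
  have : (Ch + Cl + 1) * b = e / 2 by rewrite /b; field; lra.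
  nra.
pose rho := Num.min b (b `^ a^-1).
have rho0 : 0 < rho by rewrite lt_min b0 powR_gt0.
rewrite near_withinE; apply: filterS (near_enorm_le w d0 rho0) => t [t1 t2] At.
apply: le_lt_trans (f_le w t Aw At) _.
have rho_a : enorm (w.1 - t.1) `^ a <= b.
  apply: le_trans (_ : (b `^ a^-1) `^ a <= b); last first.
    by rewrite -powRrM mulVf ?gt_eqF // powRr1 // ltW.
  apply: (@ge0_ler_powR _ a); rewrite ?nnegrE ?enorm_ge0 ?powR_ge0 ?(ltW a0) //.
  by apply: le_trans t1 _; rewrite ge_min lexx orbT.
have rho_b : enorm (w.2 - t.2) <= b by apply: le_trans t2 _; rewrite ge_min lexx.
have := ler_wpM2l Ch0 rho_a; have := ler_wpM2l Cl0 rho_b; lra.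
Qed.

Section SupportEstimates.
Variables (R : realType) (d : nat) (p eps kappa : R) (n : nat) (S : set 'rV[R]_d).
Hypotheses (p_lt1 : p < 1) (p_neq0 : p != 0) (eps_gt0 : 0 < eps) (eps_le2 : eps <= 2).
Hypotheses (n_gt0 : (0 < n)%N) (kappa_gt0 : 0 < kappa).
Hypothesis ball_sub : eball0 kappa^-1 `<=` conv_hull (S `|` [set 0]).
Hypothesis hull_sub : conv_hull (S `|` [set 0]) `<=` eball0 kappa.

Local Notation c := (n%:R^-1 : R).
Local Notation M := (pow_rem_const p c).

Let c_gt0 : 0 < c. Proof. by rewrite invr_gt0 ltr0n. Qed.
Let c_le1 : c <= 1. Proof. by rewrite invf_le1 ?ler1n ?ltr0n. Qed.
Let kappa_ge0 : 0 <= kappa. Proof. exact: ltW. Qed.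
Let M_ge0 : 0 <= M := pow_rem_const_ge0 p c.
Let S_enorm_le z : S z -> enorm z <= kappa.
Proof. exact: enorm_le_of_hull_sub_ball. Qed.
Let Oset_enorm_le x : Oset S n x -> enorm x <= kappa.
Proof. exact: enorm_le_of_ball_sub_hull. Qed.
Let Oset_dotv_ge x z : Oset S n x -> S z -> c - 1 <= dotv x z.
Proof. by move=> Ox /Ox; rewrite addrC. Qed.

Lemma Ifun_holder_on x z zh : Oset S n x -> S z -> S zh ->
  `|Ifun p eps z x - Ifun p eps zh x|
    <= 3 * (M * kappa ^+ 2) * holder_const eps kappa * enorm (z - zh) `^ Num.min eps 1.
Proof. by move=> Ox Sz Szh; apply: Ifun_holder; auto. Qed.

Lemma Ifun_lipschitz_on z x xh : S z -> Oset S n x -> Oset S n xh ->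
  `|Ifun p eps z x - Ifun p eps z xh|
    <= M * kappa * (kappa ^+ 2 / levy_weight eps kappa) * enorm (x - xh).
Proof. by move=> Sz Ox Oxh; apply: Ifun_lipschitz; auto. Qed.

Lemma Ifun_bound_on z x : S z -> Oset S n x ->
  `|Ifun p eps z x| <= M * kappa ^+ 2 * (kappa ^+ 2 / levy_weight eps kappa).
Proof. by move=> Sz Ox; apply: Ifun_bound; auto. Qed.

Lemma Ifun_continuous_on : (0 < d)%N ->
  {within S `*` Oset S n, continuous (fun zx => Ifun p eps zx.1 zx.2)}.
Proof.
move=> d_gt0; have a_gt0 : 0 < Num.min eps 1 by rewrite lt_min eps_gt0 ltr01.
have Ch_ge0 := mulr_ge0 (mulr_ge0 (ler0n R 3) (mulr_ge0 M_ge0 (sqr_ge0 kappa)))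
  (holder_const_ge0 eps kappa_ge0).
have Cl_ge0 := mulr_ge0 (mulr_ge0 M_ge0 kappa_ge0)
  (divr_ge0 (sqr_ge0 kappa) (levy_weight_ge0 eps kappa)).
apply: (holder_lipschitz_continuous d_gt0 Ch_ge0 Cl_ge0 a_gt0).
move=> [z x] [z' x'] [/= Sz Ox] [/= Sz' Ox'].
rewrite (_ : Ifun p eps z x - _ = Ifun p eps z x - Ifun p eps z' x
  + (Ifun p eps z' x - Ifun p eps z' x')); last by ring.
apply: le_trans (ler_normD _ _) _.
by apply: lerD; [apply: Ifun_holder_on | apply: Ifun_lipschitz_on].
Qed.

End SupportEstimates.

Unset Implicit Arguments.
Theorem lemmaC1 (R : realType) (d : nat) (p eps kappa : R) (n : nat) :
  (1 <= d)%N -> p < 1 -> p != 0 -> 0 < eps -> eps <= 2 ->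
  (0 < n)%N -> 0 < kappa ->
  exists C : R,
  forall S : set 'rV[R]_d,
    closed S ->
    eball0 kappa^-1 `<=` conv_hull (S `|` [set 0]) ->
    conv_hull (S `|` [set 0]) `<=` eball0 kappa ->
    [/\ {within S `*` Oset S n, continuous (fun zx => Ifun p eps zx.1 zx.2)},
        (forall x z zh, Oset S n x -> S z -> S zh -> z != zh ->
           `|Ifun p eps z x - Ifun p eps zh x|
             <= C * powR (enorm (z - zh)) (Num.min eps 1)),
        (forall z x xh, S z -> Oset S n x -> Oset S n xh -> x != xh ->
           `|Ifun p eps z x - Ifun p eps z xh| <= C * enorm (x - xh)) &
        (forall z x, S z -> Oset S n x -> `|Ifun p eps z x| <= C)].
Proof.
move=> d_gt0 p_lt1 p_neq0 eps_gt0 eps_le2 n_gt0 kappa_gt0.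
pose M := pow_rem_const p n%:R^-1; pose G := kappa ^+ 2 / levy_weight eps kappa.
exists (Num.max (3 * (M * kappa ^+ 2) * holder_const eps kappa)
                (Num.max (M * kappa * G) (M * kappa ^+ 2 * G))).
move=> S _ ball_sub hull_sub; split.
- exact: (Ifun_continuous_on p_lt1 p_neq0 eps_gt0 eps_le2 n_gt0 kappa_gt0
    ball_sub hull_sub d_gt0).
- move=> x z zh Ox Sz Szh _.
  apply: le_trans (Ifun_holder_on p_lt1 p_neq0 eps_gt0 eps_le2 n_gt0 kappa_gt0
    ball_sub hull_sub Ox Sz Szh) _.
  by rewrite ler_wpM2r ?powR_ge0 // le_max lexx.
- move=> z x xh Sz Ox Oxh _.
  apply: le_trans (Ifun_lipschitz_on p_lt1 p_neq0 eps_gt0 eps_le2 n_gt0 kappa_gt0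
    ball_sub hull_sub Sz Ox Oxh) _.
  by rewrite ler_wpM2r ?enorm_ge0 // !le_max lexx orbT.
- move=> z x Sz Ox.
  apply: le_trans (Ifun_bound_on p_lt1 p_neq0 eps_gt0 eps_le2 n_gt0 kappa_gt0
    ball_sub hull_sub Sz Ox) _.
  by rewrite !le_max lexx !orbT.
Qed.
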